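(* Let $S$ be a surface, $\phi:S\to\mathbf{Ein}^{1,1}$ an immersion with $\phi^*\tau$ trivial, $g$ a $C^2$ Lorentz metric on $S$ compatible with the induced split structure, $\sigma$ an isotropic surface with $[\sigma]=\phi$ and $g(u,v)=\langle\mathrm D_u\sigma,\mathrm D_v\sigma\rangle$, and $\eta$ its dual isotropic surface. Let $\psi=(\frac{\sqrt2}{2}(\sigma-\eta),\frac{\sqrt2}{2}(\sigma+\eta))$ be the $g$-Epstein surface and $\pi$ the projection to the base point. Then $\pi\circ\psi=\frac{\sqrt2}{2}(\sigma-\eta)$ is an envelope of the family of horospheres $\mathcal H(g)=\{H(\sigma(s)):s\in S\}$, i.e. for every $s\in S$, $\pi\circ\psi(s)\in H(\sigma(s))$ and $\mathrm d_s(\pi\circ\psi)(\mathsf T_sS)\subset\mathsf T_{\pi\circ\psi(s)}H(\sigma(s))$.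
   Context: $W$ is a real $4$-dimensional vector space with a quadratic form of signature $(2,2)$ and polar form $\langle\cdot,\cdot\rangle$; $\mathbf H^{2,1}_+=\{x:\langle x,x\rangle=-1\}$, $\mathbf{Ein}^{1,1}=\{[x]\in\mathbf P(W):\langle x,x\rangle=0\}$ with tautological line bundle $\tau$ and canonical split structure given (via a Segre identification with $\mathbf{RP}^1\times\mathbf{RP}^1$) by the fibers of the two projections; compatible metrics have these leaves isotropic with the positivity convention on oriented split bases. An isotropic surface is an immersion $\sigma:S\to W$ with $\langle\sigma,\sigma\rangle=0$ and $\sigma(s)$ transverse to the image of $\mathsf T_s\sigma$; its dual $\eta$ satisfies $\langle\eta,\sigma\rangle=1$, $\langle\eta,\eta\rangle=0$, $\langle\eta,\mathrm D_u\sigma\rangle=0$. For a nonzero isotropic vector $x_0\in W$, the horosphere is $H(x_0)=\{p\in\mathbf H^{2,1}_+:\langle x_0,p\rangle=-\frac{\sqrt2}{2}\}$, whose tangent space at $p$ is $\operatorname{span}\{x_0,p\}^\perp$. *)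

From HB Require Import structures.
From mathcomp Require Import all_boot all_order all_algebra.
From mathcomp Require Import all_classical all_reals all_analysis.
Set Implicit Arguments. Unset Strict Implicit. Unset Printing Implicit Defensive.
Import Order.TTheory GRing.Theory Num.Theory.
Import numFieldNormedType.Exports.
Local Open Scope classical_set_scope.
Local Open Scope ring_scope.

(* Model of W: W = R^2 (x) R^2 = 'M[R]_2 with quadratic form \det
   (signature (2,2)); the Segre map RP^1 x RP^1 -> Ein^{1,1} is
   ([a],[b]) |-> [a b^T].  Surfaces are modelled on an open set
   U of R^2 = 'rV[R]_2 (a chart), with its standard orientation. *)

Definition W (R : realType) := 'M[R]_2.

Definition bil (R : realType) (x y : 'M[R]_2) : R :=
  (\det (x + y) - \det x - \det y) / 2.

Definition hyp (R : realType) : set 'M[R]_2 := [set x | bil x x = -1].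

Definition horosphere (R : realType) (x0 : 'M[R]_2) : set 'M[R]_2 :=
  [set p | hyp p /\ bil x0 p = - (Num.sqrt 2 / 2)].

Definition horo_tangent (R : realType) (x0 p : 'M[R]_2) : set 'M[R]_2 :=
  [set v | bil x0 v = 0 /\ bil p v = 0].

Fixpoint Ck (R : realType) (V : normedModType R) (k : nat)
    (U : set 'rV[R]_2) (f : 'rV[R]_2 -> V) : Prop :=
  match k with
  | 0 => {in U, continuous f}
  | k'.+1 => (forall s, U s -> differentiable f s) /\
             (forall v : 'rV[R]_2, Ck k' U (fun s => 'D_v f s))
  end.

Definition isotropic_surface (R : realType) (U : set 'rV[R]_2)
    (sigma : 'rV[R]_2 -> 'M[R]_2) : Prop :=
  forall s, U s ->
    [/\ differentiable sigma s,
        (forall u, 'D_u sigma s = 0 -> u = 0),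
        bil (sigma s) (sigma s) = 0 &
        (forall u, 'D_u sigma s <> sigma s)].

Definition dual_surface (R : realType) (U : set 'rV[R]_2)
    (sigma eta : 'rV[R]_2 -> 'M[R]_2) : Prop :=
  forall s, U s ->
    [/\ bil (eta s) (sigma s) = 1, bil (eta s) (eta s) = 0 &
        (forall u, bil (eta s) ('D_u sigma s) = 0)].

Definition induced_metric (R : realType) (sigma : 'rV[R]_2 -> 'M[R]_2)
    (s u v : 'rV[R]_2) : R := bil ('D_u sigma s) ('D_v sigma s).

Definition e1 {R : realType} : 'rV[R]_2 := \row_j (j == ord0)%:R.
Definition e2 {R : realType} : 'rV[R]_2 := \row_j (j == ord_max)%:R.

Definition C2_lorentz (R : realType) (U : set 'rV[R]_2)
    (g : 'rV[R]_2 -> 'rV[R]_2 -> 'rV[R]_2 -> R) : Prop :=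
  (forall u v, Ck 2 U (fun s => g s u v)) /\
  (forall s, U s -> g s e1 e1 * g s e2 e2 - g s e1 e2 ^+ 2 < 0).

(* split structure on S induced by phi = [sigma] through the Segre
   identification: leaf1 = fibres of the first projection ([a] constant:
   columns of D_u sigma in the column space of sigma(s)), leaf2 = fibres of
   the second projection ([b] constant: rows in the row space). *)
Definition leaf1 (R : realType) (sigma : 'rV[R]_2 -> 'M[R]_2) (s u : 'rV[R]_2)
  : Prop := (('D_u sigma s)^T <= (sigma s)^T)%MS.
Definition leaf2 (R : realType) (sigma : 'rV[R]_2 -> 'M[R]_2) (s u : 'rV[R]_2)
  : Prop := ('D_u sigma s <= sigma s)%MS.

Definition det2 (R : realType) (u v : 'rV[R]_2) : R :=
  u ord0 ord0 * v ord0 ord_max - u ord0 ord_max * v ord0 ord0.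

Definition compatible (R : realType) (U : set 'rV[R]_2)
    (sigma : 'rV[R]_2 -> 'M[R]_2)
    (g : 'rV[R]_2 -> 'rV[R]_2 -> 'rV[R]_2 -> R) : Prop :=
  forall s, U s ->
    [/\ (forall u, leaf1 sigma s u -> g s u u = 0),
        (forall u, leaf2 sigma s u -> g s u u = 0) &
        (forall u v, leaf1 sigma s u -> leaf2 sigma s v -> 0 < det2 u v ->
            0 < g s u v)].

Definition epstein (R : realType) (sigma eta : 'rV[R]_2 -> 'M[R]_2)
    (s : 'rV[R]_2) : 'M[R]_2 * 'M[R]_2 :=
  ((Num.sqrt 2 / 2) *: (sigma s - eta s), (Num.sqrt 2 / 2) *: (sigma s + eta s)).

Definition base_pt {R : realType} (x : 'M[R]_2 * 'M[R]_2) : 'M[R]_2 := x.1.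

From HB Require Import structures.
From mathcomp Require Import all_boot all_order all_algebra.
From mathcomp Require Import all_classical all_reals all_analysis.
From mathcomp Require Import ring.
Import Order.TTheory GRing.Theory Num.Theory.
Import numFieldNormedType.Exports.
Local Open Scope classical_set_scope.
Local Open Scope ring_scope.
Set Implicit Arguments. Unset Strict Implicit.

(* Differentiating the defining identities <sigma,sigma> = 0, <eta,eta> = 0,
   <eta,sigma> = 1 and using <eta, D sigma> = 0 shows that sigma and eta are
   both orthogonal to D sigma and D eta.  Hence the derivative of
   p = sqrt2/2 (sigma - eta) is orthogonal to sigma and to p, i.e. tangent to
   H(sigma), while <p,p> = -1 and <sigma,p> = -sqrt2/2 are direct
   computations. *)

Lemma det_mx2 (R : comNzRingType) (x : 'M[R]_2) :
  \det x = x 0 0 * x 1 1 - x 0 1 * x 1 0.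
Proof.
rewrite (expand_det_row _ 0) !big_ord_recl big_ord0 /cofactor !det_mx11 /=.
rewrite !mxE /= expr0 expr1 !mul1r mulN1r addr0.
have -> : lift (0 : 'I_2) (0 : 'I_1) = 1 by apply/val_inj.
have -> : (ord0 : 'I_2) = 0 by apply/val_inj.
have -> : lift (1 : 'I_2) (0 : 'I_1) = 0 by apply/val_inj.
by rewrite mulrN.
Qed.

Section PolarForm.
Variable R : realType.
Implicit Types (a : R) (x y z : 'M[R]_2).

Lemma bilE x y :
  bil x y = (x 0 0 * y 1 1 + y 0 0 * x 1 1 - x 0 1 * y 1 0 - y 0 1 * x 1 0) / 2.
Proof. by rewrite /bil !det_mx2 !mxE; ring. Qed.

Lemma bilC x y : bil x y = bil y x.
Proof. by rewrite !bilE; ring. Qed.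

Lemma bilBl x y z : bil (x - y) z = bil x z - bil y z.
Proof. by rewrite !bilE !mxE; ring. Qed.

Lemma bilZl a x y : bil (a *: x) y = a * bil x y.
Proof. by rewrite !bilE !mxE; ring. Qed.

Lemma bilBr x y z : bil x (y - z) = bil x y - bil x z.
Proof. by rewrite bilC bilBl !(bilC x). Qed.

Lemma bilZr a x y : bil x (a *: y) = a * bil x y.
Proof. by rewrite bilC bilZl bilC. Qed.

End PolarForm.

Section PolarFormDerivative.
Variables (R : realType) (V : normedModType R).
Implicit Types (f g : V -> 'M[R]_2) (s u : V).

Lemma is_derive_entry f s u i j : derivable f s u ->
  is_derive s u (fun x => f x i j) ('D_u f s i j).
Proof.
move=> df; rewrite derive_mx // mxE.
exact/derivableP/((derivable_mxP f s u).1 df).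
Qed.

Lemma is_derive_bil f g s u : derivable f s u -> derivable g s u ->
  is_derive s u (fun x => bil (f x) (g x))
    (bil ('D_u f s) (g s) + bil (f s) ('D_u g s)).
Proof.
move=> df dg.
pose F i j x : R := f x i j; pose G i j x : R := g x i j.
have -> : (fun x => bil (f x) (g x)) =
    (F 0 0 * G 1 1 + G 0 0 * F 1 1 - F 0 1 * G 1 0 - G 0 1 * F 1 0) * cst 2^-1.
  by apply: funext => x; rewrite bilE.
have dF i j : is_derive s u (F i j) ('D_u f s i j) by exact: is_derive_entry.
have dG i j : is_derive s u (G i j) ('D_u g s i j) by exact: is_derive_entry.
by apply: is_derive_eq; rewrite !bilE scaler0 add0r /GRing.scale /F /G /=; ring.
Qed.

Lemma derive_bil_near_cst f g s u (c : R) :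
  derivable f s u -> derivable g s u ->
  (\forall x \near s, bil (f x) (g x) = c) ->
  bil ('D_u f s) (g s) + bil (f s) ('D_u g s) = 0.
Proof.
move=> df dg fg_cst.
rewrite -(derive_val (is_derive := is_derive_bil df dg)) (near_eq_derive _ fg_cst).
exact: derive_cst.
Qed.

Lemma bil_derive_isotropic f s u : derivable f s u ->
  (\forall x \near s, bil (f x) (f x) = 0) -> bil (f s) ('D_u f s) = 0.
Proof.
move=> df /(derive_bil_near_cst df df); rewrite bilC -mulr2n => /eqP.
by rewrite mulrn_eq0 => /eqP.
Qed.

End PolarFormDerivative.

Section Horosphere.
Variable R : realType.
Implicit Types x y v : 'M[R]_2.

Let c : R := Num.sqrt 2 / 2.

Lemma sqrt2_half_sqr : c * c = 1 / 2.
Proof.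
rewrite /c mulrACA -expr2 sqr_sqrtr ?ler0n //.
by field.
Qed.

Lemma horosphere_sqrt2_half x y :
  bil x x = 0 -> bil y y = 0 -> bil y x = 1 ->
  horosphere x (c *: (x - y)).
Proof.
move=> xx yy yx; split.
- rewrite /hyp /= bilZl bilZr mulrA sqrt2_half_sqr bilBl !bilBr.
  by rewrite (bilC x y) xx yy yx; field.
- by rewrite bilZr bilBr xx (bilC x y) yx sub0r mulrN1.
Qed.

Lemma horo_tangent_sqrt2_half x y v :
  bil x v = 0 -> bil y v = 0 -> horo_tangent x (c *: (x - y)) v.
Proof. by move=> xv yv; split=> //; rewrite bilZl bilBl xv yv subrr mulr0. Qed.

End Horosphere.

Lemma base_epsteinE (R : realType) (sigma eta : 'rV[R]_2 -> 'M[R]_2) :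
  base_pt \o epstein sigma eta = (Num.sqrt 2 / 2) \*: (sigma - eta).
Proof. by []. Qed.

Section EpsteinBase.
Variables (R : realType) (U : set 'rV[R]_2) (sigma eta : 'rV[R]_2 -> 'M[R]_2).
Hypotheses (oU : open U) (iso : isotropic_surface U sigma)
  (dual : dual_surface U sigma eta) (deta : forall s, U s -> differentiable eta s).

Variables (s u : 'rV[R]_2).
Hypothesis Us : U s.

Let near_U : \forall x \near s, U x.
Proof. by move: oU; rewrite openE => /(_ s Us). Qed.

Let dsigma : derivable sigma s u.
Proof. by have [+ _ _ _] := iso Us; exact: diff_derivable. Qed.

Let deta_u : derivable eta s u.
Proof. exact/diff_derivable/deta. Qed.

Lemma bil_sigma_derive_sigma : bil (sigma s) ('D_u sigma s) = 0.
Proof.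
apply: bil_derive_isotropic dsigma _.
by apply: filterS near_U => x /iso[].
Qed.

Lemma bil_eta_derive_eta : bil (eta s) ('D_u eta s) = 0.
Proof.
apply: bil_derive_isotropic deta_u _.
by apply: filterS near_U => x /dual[].
Qed.

Lemma bil_eta_derive_sigma : bil (eta s) ('D_u sigma s) = 0.
Proof. by have [_ _ ->] := dual Us. Qed.

Lemma bil_sigma_derive_eta : bil (sigma s) ('D_u eta s) = 0.
Proof.
have : bil ('D_u eta s) (sigma s) + bil (eta s) ('D_u sigma s) = 0.
  apply: (derive_bil_near_cst deta_u dsigma (c := 1)).
  by apply: filterS near_U => x /dual[].
by rewrite bil_eta_derive_sigma addr0 bilC.
Qed.

Lemma derive_sqrt2_half_sub :
  'D_u ((Num.sqrt 2 / 2) \*: (sigma - eta)) s =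
  (Num.sqrt 2 / 2) *: ('D_u sigma s - 'D_u eta s).
Proof. by rewrite deriveZ ?deriveB; last exact: derivableB. Qed.

End EpsteinBase.

Theorem mainTheorem16 (R : realType) (U : set 'rV[R]_2)
    (sigma eta : 'rV[R]_2 -> 'M[R]_2) :
  open U ->
  isotropic_surface U sigma ->
  C2_lorentz U (induced_metric sigma) ->
  compatible U sigma (induced_metric sigma) ->
  dual_surface U sigma eta ->
  (forall s, U s -> differentiable eta s) ->
  forall s, U s ->
    horosphere (sigma s) ((base_pt \o epstein sigma eta) s) /\
    forall u : 'rV[R]_2,
      horo_tangent (sigma s) ((base_pt \o epstein sigma eta) s)
        ('D_u (base_pt \o epstein sigma eta) s).
Proof.
move=> oU iso _ _ dual deta s Us.
have [_ _ sigma_isotropic _] := iso s Us.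
have [eta_sigma eta_isotropic _] := dual s Us.
rewrite base_epsteinE; split; first exact: horosphere_sqrt2_half.
move=> u; rewrite (derive_sqrt2_half_sub iso deta u Us).
apply: horo_tangent_sqrt2_half; rewrite bilZr bilBr.
- rewrite (bil_sigma_derive_sigma oU iso u Us).
  by rewrite (bil_sigma_derive_eta oU iso dual deta u Us) subrr mulr0.
- rewrite (bil_eta_derive_sigma dual u Us).
  by rewrite (bil_eta_derive_eta oU dual deta u Us) subrr mulr0.
Qed.
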